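(* Let $\mathfrak g$ be a finite-dimensional simple Lie algebra over $\mathbb R$ or $\mathbb C$, and let $\mathfrak g=\mathfrak g_{\bar 0}\oplus\mathfrak g_{\bar 1}$ be a nontrivial $\mathbb Z_2$-grading (i.e. $[\mathfrak g_{\bar i},\mathfrak g_{\bar j}]\subseteq\mathfrak g_{\overline{i+j}}$ and $\mathfrak g_{\bar 1}\neq 0$). Then $\mathfrak g_{\bar 1}$ is a maximal Lie triple subsystem of $\mathfrak g$.
   Context: A Lie algebra $\mathfrak g$ is regarded as a Lie triple system with triple product $[x,y,z]:=[[x,y],z]$. A Lie triple subsystem of $\mathfrak g$ is a vector subspace $T$ with $[[T,T],T]\subseteq T$. A maximal Lie triple subsystem is a proper Lie triple subsystem not properly contained in any other proper Lie triple subsystem. *)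

From HB Require Import structures.
From mathcomp Require Import all_boot all_order all_algebra complex.
From mathcomp Require Import Rstruct.
Set Implicit Arguments. Unset Strict Implicit. Unset Printing Implicit Defensive.
Import GRing.Theory.
Local Open Scope ring_scope.

Section Lie.
Variables (K : fieldType) (V : vectType K).

Definition is_lie_bracket (br : V -> V -> V) : Prop :=
  [/\ (forall (a : K) (x y z : V), br (a *: x + y) z = a *: br x z + br y z),
      (forall (a : K) (x y z : V), br x (a *: y + z) = a *: br x y + br x z),
      (forall x : V, br x x = 0) &
      (forall x y z : V, br x (br y z) + br y (br z x) + br z (br x y) = 0)].

Definition lie_ideal (br : V -> V -> V) (I : {vspace V}) : Prop :=
  forall x y : V, y \in I -> br x y \in I.

Definition simple_lie (br : V -> V -> V) : Prop :=
  (exists x y : V, br x y != 0) /\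
  (forall I : {vspace V}, lie_ideal br I -> I = 0%VS \/ I = fullv).

(* g false = g_0bar, g true = g_1bar; V = g_0 (+) g_1 and [g_i, g_j] in g_(i+j). *)
Definition Z2_grading (br : V -> V -> V) (g : bool -> {vspace V}) : Prop :=
  [/\ directv (g false + g true)%VS,
      (g false + g true)%VS = fullv &
      (forall (i j : bool) (x y : V), x \in g i -> y \in g j -> br x y \in g (i (+) j))].

Definition lie_triple_subsystem (br : V -> V -> V) (T : {vspace V}) : Prop :=
  forall x y z : V, x \in T -> y \in T -> z \in T -> br (br x y) z \in T.

Definition maximal_lts (br : V -> V -> V) (T : {vspace V}) : Prop :=
  [/\ T != fullv, lie_triple_subsystem br T &
      forall T' : {vspace V}, lie_triple_subsystem br T' -> T' != fullv ->
        (T <= T')%VS -> T' = T].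

End Lie.

From HB Require Import structures.
From mathcomp Require Import all_boot all_order all_algebra complex.
From mathcomp Require Import Rstruct.
Set Implicit Arguments. Unset Strict Implicit. Unset Printing Implicit Defensive.
Import GRing.Theory.
Local Open Scope ring_scope.

(* The even part g0 is spanned by [g1, g1]: indeed [g1, g1] + g1 is a nonzero
   ideal, hence everything.  Consequently, if T is a Lie triple system
   containing g1, then [g0, T] <= T, because [[x, y], a] is a triple product.
   Put Te := T :&: g0.  Then Te + [g1, Te] is an ideal contained in T, so it
   vanishes when T is proper; thus Te = 0, i.e. T = g1. *)

Section LieBracket.
Variables (K : fieldType) (V : vectType K) (br : V -> V -> V).
Hypothesis brL : is_lie_bracket br.

Lemma br_linear x : linear (br x).
Proof. by case: brL => _ brDr _ _ a y z; rewrite brDr. Qed.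

HB.instance Definition _ x := GRing.isLinear.Build K V V *:%R (br x) (br_linear x).

Lemma brDl x y z : br (x + y) z = br x z + br y z.
Proof. by case: brL => brZDl _ _ _; have := brZDl 1 x y z; rewrite !scale1r. Qed.

Lemma br_anticomm x y : br y x = - br x y.
Proof.
case: brL => _ _ brxx _; apply/eqP; rewrite -addr_eq0.
by have := brxx (x + y); rewrite brDl !raddfD /= !brxx add0r addr0 addrC => ->.
Qed.

Lemma br_derivation x y z : br x (br y z) = br (br x y) z + br y (br x z).
Proof.
case: brL => _ _ _ jacobi; have := jacobi x y z.
rewrite (br_anticomm x z) (br_anticomm (br x y) z) raddfN -addrA -opprD.
by move/eqP; rewrite subr_eq0 addrC => /eqP.
Qed.

(* Preimages under ad make {y | [x, y] \in X} a subspace; every spanning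
   argument below goes through them. *)
Definition ad x : 'End(V) := linfun (br x).

Lemma memv_ad_preim (X : {vspace V}) x y : (y \in ad x @^-1: X)%VS = (br x y \in X).
Proof. by rewrite -memv_preim lfunE. Qed.

Lemma memv_ad_preiml (X : {vspace V}) x y : (x \in ad y @^-1: X)%VS = (br x y \in X).
Proof. by rewrite memv_ad_preim br_anticomm memvN. Qed.

Definition brspan (U W : {vspace V}) : {vspace V} :=
  <<[seq br x y | x <- vbasis U, y <- vbasis W]>>%VS.

Lemma mem_brspan (U W : {vspace V}) x y : x \in U -> y \in W -> br x y \in brspan U W.
Proof.
move=> Ux Wy; rewrite -memv_ad_preiml; move: x Ux; apply/subvP.
rewrite -{1}(span_basis (vbasisP U)); apply/span_subvP => x Ux.
rewrite memv_ad_preiml -memv_ad_preim; move: y Wy; apply/subvP.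
rewrite -{1}(span_basis (vbasisP W)); apply/span_subvP => y Wy.
by rewrite memv_ad_preim memv_span //; apply/allpairsP; exists (x, y).
Qed.

Lemma brspan_subv (U W X : {vspace V}) :
  (forall x y, x \in U -> y \in W -> br x y \in X) -> (brspan U W <= X)%VS.
Proof.
move=> brUW; apply/span_subvP => _ /allpairsP[[x y] [Ux Wy ->]].
by apply: brUW; apply: vbasis_mem.
Qed.

Section Graded.
Variable g : bool -> {vspace V}.
Hypothesis grading : Z2_grading br g.

Lemma graded_cap : (g false :&: g true = 0)%VS.
Proof. by case: grading => /directv_addP. Qed.

Lemma graded_sum : (g false + g true = fullv)%VS.
Proof. by case: grading. Qed.

Lemma br_graded i j x y : x \in g i -> y \in g j -> br x y \in g (i (+) j).
Proof. by case: grading => _ _; apply. Qed.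

Lemma graded_ideal (I : {vspace V}) :
  (forall i x y, x \in g i -> y \in I -> br x y \in I) -> lie_ideal br I.
Proof.
move=> brgI x y Iy; rewrite -memv_ad_preiml; move: x (memvf x); apply/subvP.
rewrite -graded_sum subv_add; apply/andP; split; apply/subvP=> x gx;
  by rewrite memv_ad_preiml (brgI _ _ _ gx).
Qed.

Lemma odd_part_lts : lie_triple_subsystem br (g true).
Proof. by move=> x y z gx gy gz; exact: br_graded (br_graded gx gy) gz. Qed.

Hypotheses (simple : simple_lie br) (odd_neq0 : g true != 0%VS).

Lemma odd_part_proper : g true != fullv.
Proof.
have [[x [y brxy_neq0]] _] := simple; apply: contra_neq brxy_neq0 => odd_full.
have: br x y \in g false by apply: (@br_graded true true); rewrite odd_full memvf.
by rewrite -[g false]capvf -odd_full graded_cap memv0 => /eqP.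
Qed.

Lemma even_part_brspan : g false = brspan (g true) (g true).
Proof.
set D := brspan _ _.
have D_even : (D <= g false)%VS by apply: brspan_subv; apply: (@br_graded true true).
have D_odd_ideal : lie_ideal br (D + g true).
  apply: graded_ideal => i x y gx; rewrite -memv_ad_preim; move: y; apply/subvP.
  rewrite subv_add; apply/andP; split.
    apply: brspan_subv => a b ga gb; rewrite memv_ad_preim.
    case: i gx => gx.
      apply: (subvP (addvSr _ _)).
      by apply: (@br_graded true false) gx _; apply: br_graded ga gb.
    apply: (subvP (addvSl _ _)).
    by rewrite br_derivation memvD // mem_brspan //; apply: (@br_graded false true).
  apply/subvP=> z gz; rewrite memv_ad_preim.
  case: i gx => gx; first by apply: (subvP (addvSl _ _)); apply: mem_brspan.
  by apply: (subvP (addvSr _ _)); apply: (@br_graded false true).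
case: simple => _ /(_ _ D_odd_ideal) [D_odd0 | D_odd_full].
  by case/negP: odd_neq0; rewrite -subv0 -D_odd0 addvSr.
by rewrite -[g false]capfv -D_odd_full -vspace_modl // capvC graded_cap addv0.
Qed.

Section LtsOverOddPart.
Variable T : {vspace V}.
Hypotheses (T_lts : lie_triple_subsystem br T) (odd_sub : (g true <= T)%VS).

Lemma even_part_normalizes c a : c \in g false -> a \in T -> br c a \in T.
Proof.
move=> gc Ta; rewrite even_part_brspan -memv_ad_preiml in gc *.
move: c gc; apply/subvP.
apply: brspan_subv => x y gx gy; rewrite memv_ad_preiml.
by apply: T_lts => //; apply: (subvP odd_sub).
Qed.

Let Te := (T :&: g false)%VS.

Lemma even_lts_ideal : lie_ideal br (Te + brspan (g true) Te).
Proof.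
have normTe x a : x \in g false -> a \in Te -> br x a \in Te.
  move=> gx /memv_capP[Ta ga]; rewrite memv_cap even_part_normalizes //=.
  exact: br_graded gx ga.
have odd_subT y : y \in g true -> y \in T by apply: (subvP odd_sub).
apply: graded_ideal => i x y gx; rewrite -memv_ad_preim; move: y; apply/subvP.
rewrite subv_add; apply/andP; split.
  apply/subvP=> a Tea; rewrite memv_ad_preim.
  case: i gx => gx; first by apply: (subvP (addvSr _ _)); apply: mem_brspan.
  by apply: (subvP (addvSl _ _)); apply: normTe.
apply: brspan_subv => y a gy Tea; rewrite memv_ad_preim.
case: i gx => gx.
  apply: (subvP (addvSl _ _)); have /memv_capP[Ta ga] := Tea.
  rewrite memv_cap; apply/andP; split.
    by rewrite br_anticomm memvN; apply: T_lts => //; apply: odd_subT.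
  by apply: (@br_graded true true) gx _; apply: br_graded gy ga.
apply: (subvP (addvSr _ _)).
by rewrite br_derivation memvD ?mem_brspan ?normTe //; apply: (@br_graded false true).
Qed.

Lemma even_lts_ideal_sub : (Te + brspan (g true) Te <= T)%VS.
Proof.
rewrite subv_add capvSl /=; apply: subv_trans odd_sub.
by apply: brspan_subv => y a gy /memv_capP[_ ga]; apply: (@br_graded true false).
Qed.

Lemma proper_lts_eq_odd_part : T != fullv -> T = g true.
Proof.
move=> T_proper; case: simple => _ /(_ _ even_lts_ideal) [J0 | Jfull]; last first.
  by case/negP: T_proper; rewrite eqEsubv subvf -Jfull even_lts_ideal_sub.
have Te_eq0 : Te = 0%VS by apply/eqP; rewrite -subv0 -J0 addvSl.
by rewrite -[T]capvf -graded_sum -vspace_modr // -/Te Te_eq0 add0v.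
Qed.

End LtsOverOddPart.

Theorem odd_part_maximal_lts : maximal_lts br (g true).
Proof.
split; [exact: odd_part_proper | exact: odd_part_lts |].
by move=> T T_lts T_proper odd_sub; apply: proper_lts_eq_odd_part.
Qed.

End Graded.
End LieBracket.

Theorem mainTheorem4 :
  (forall (V : vectType Rdefinitions.R) (br : V -> V -> V) (g : bool -> {vspace V}),
     is_lie_bracket br -> simple_lie br -> Z2_grading br g -> g true != 0%VS ->
     maximal_lts br (g true))
  /\
  (forall (V : vectType (Rdefinitions.R)[i]) (br : V -> V -> V) (g : bool -> {vspace V}),
     is_lie_bracket br -> simple_lie br -> Z2_grading br g -> g true != 0%VS ->
     maximal_lts br (g true)).
Proof. by split=> V br g *; apply: odd_part_maximal_lts. Qed.
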